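(* Let $t\in[n]$, let $S\subseteq N$ be $t$-switchable, let $a\in S$ and $b\in N$. Let $L\subseteq[t]$ be such that ${\rm s}(l,a,b)\in S$ for all $l\in L$. Then ${\rm s}(L,a,b)\in S$.
   Context: Fix positive integers $n, r_1,\dots,r_n$ and let $N=[r_1]\times\cdots\times[r_n]$. For $L\subseteq[n]$ and $a,b\in N$, ${\rm s}(L,a,b)\in N$ has $i$-th component $b_i$ if $i\in L$ and $a_i$ otherwise; ${\rm s}(l,a,b)={\rm s}(\{l\},a,b)$. Let $d(a,b)=\#\{j: a_j\neq b_j\}$. A subset $S\subseteq N$ is $t$-switchable if for all $a,b\in S$ with $d(a,b)=2$ and all $i\in[t]$, ${\rm s}(i,a,b)\in S$. *)

From mathcomp Require Import all_boot.
Set Implicit Arguments. Unset Strict Implicit. Unset Printing Implicit Defensive.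

(* Coordinates [n] are 'I_n (index i : 'I_n stands for i+1 in the paper).
   N = [r_1] x ... x [r_n] is the finite type of dependent finite functions. *)
Definition grid (n : nat) (r : 'I_n -> nat) : finType :=
  {dffun forall i : 'I_n, 'I_(r i)}.

Definition sw n (r : 'I_n -> nat) (L : {set 'I_n}) (a b : grid r) : grid r :=
  [ffun i => if i \in L then b i else a i].

Definition dist n (r : 'I_n -> nat) (a b : grid r) : nat :=
  #|[set j : 'I_n | a j != b j]|.

(* [t] as a set of coordinates: indices i with i < t (i.e. paper index i+1 <= t) *)
Definition first_coords n (t : nat) : {set 'I_n} := [set i : 'I_n | i < t].

Definition switchable n (r : 'I_n -> nat) (t : nat) (S : {set grid r}) : Prop :=
  forall a b, a \in S -> b \in S -> dist a b = 2 ->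
    forall i : 'I_n, i \in first_coords n t -> sw [set i] a b \in S.

From mathcomp Require Import all_boot.

(* Induction on the coordinates of L where a and b actually differ.  For such
   a set K with two elements k1 != k2, the points s(K \ k1, a, b) and
   s(K \ k2, a, b) lie in S by induction and differ exactly in k1 and k2, so
   switching coordinate k1 of the first to the second yields s(K, a, b). *)

Section Switch.

Variables (n : nat) (r : 'I_n -> nat).
Implicit Types (K : {set 'I_n}) (a b : grid r).

Lemma swE K a b j : sw K a b j = if j \in K then b j else a j.
Proof. by rewrite /sw ffunE. Qed.

Lemma sw0 a b : sw set0 a b = a.
Proof. by apply/ffunP => j; rewrite swE in_set0. Qed.

Lemma sw_diff K a b : sw K a b = sw [set l in K | a l != b l] a b.
Proof.
apply/ffunP => j; rewrite !swE inE.
by case: (j \in K) => //=; case: eqP => [->|].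
Qed.

Lemma sw1_swD1 {K} a b {k1 k2} : k1 \in K -> k1 != k2 ->
  sw [set k1] (sw (K :\ k1) a b) (sw (K :\ k2) a b) = sw K a b.
Proof.
move=> k1K ne12; apply/ffunP => j; rewrite !swE in_set1 !in_setD1.
by case: (eqVneq j k1) => [->|] //=; rewrite ne12 k1K.
Qed.

Lemma dist_swD1 K a b k1 k2 :
  k1 \in K -> k2 \in K -> k1 != k2 -> a k1 != b k1 -> a k2 != b k2 ->
  dist (sw (K :\ k1) a b) (sw (K :\ k2) a b) = 2.
Proof.
move=> k1K k2K ne12 ab1 ab2; rewrite /dist.
have -> : [set j | sw (K :\ k1) a b j != sw (K :\ k2) a b j] = [set k1; k2].
  apply/setP => j; rewrite !inE !swE !in_setD1.
  case: (eqVneq j k1) => [->|ne1] /=; first by rewrite ne12 k1K.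
  case: (eqVneq j k2) => [->|ne2] /=; first by rewrite k2K eq_sym ab2.
  by rewrite eqxx.
by rewrite cards2 ne12.
Qed.

Variables (t : nat) (S : {set grid r}).
Hypothesis switchS : switchable t S.
Variables (a b : grid r) (L : {set 'I_n}).
Hypotheses (aS : a \in S) (sLt : L \subset first_coords n t).
Hypothesis sw1S : forall l, l \in L -> sw [set l] a b \in S.

Lemma sw_diff_subset_in K :
  K \subset [set l in L | a l != b l] -> sw K a b \in S.
Proof.
move: {2}#|K| (leqnn #|K|) => m; elim: m K => [|m IH] K.
  by rewrite leqn0 cards_eq0 => /eqP -> _; rewrite sw0.
move=> cardK sKL.
have inKL k : k \in K -> k \in L /\ a k != b k.
  by move/(subsetP sKL); rewrite inE => /andP.
case: (set_0Vmem K) => [->|[k1 k1K]]; first by rewrite sw0.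
have [k1L ab1] := inKL _ k1K.
case: (set_0Vmem (K :\ k1)) => [K1E|[k2]].
  suff -> : K = [set k1] by apply: sw1S.
  by rewrite -(setD1K k1K) K1E setU0.
rewrite in_setD1 => /andP [ne21 k2K].
have [_ ab2] := inKL _ k2K.
have swD1S k : k \in K -> sw (K :\ k) a b \in S.
  move=> kK; apply: IH; last exact: subset_trans (subsetDl _ _) sKL.
  by move: cardK; rewrite (cardsD1 k K) kK.
have ne12 : k1 != k2 by rewrite eq_sym.
rewrite -(sw1_swD1 a b k1K ne12).
apply: switchS (swD1S _ k1K) (swD1S _ k2K) _ _ (subsetP sLt _ k1L).
exact: dist_swD1.
Qed.

End Switch.

Theorem lemma3p2 (n : nat) (r : 'I_n -> nat) (r_pos : forall i, 0 < r i)
  (t : nat) (ht : 1 <= t <= n) (S : {set grid r}) (hS : switchable t S)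
  (a b : grid r) (ha : a \in S) (L : {set 'I_n})
  (hL : L \subset first_coords n t)
  (hLS : forall l, l \in L -> sw [set l] a b \in S) :
  sw L a b \in S.
Proof. by rewrite sw_diff; apply: (@sw_diff_subset_in n r t S hS a b L ha hL hLS). Qed.
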